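(* Let $m \le n$, let $1 \le h \le k \le m$, and let $X$ be any linear operator on $\mathcal{H}_n \otimes \mathcal{H}_m$. Then \[ \|X\|_{S(h)} \le \|X\|_{S(k)} \le \frac{k}{h}\|X\|_{S(h)}. \]
   Context: $\mathcal{H}_d = \mathbb{C}^d$ and $m\le n$. $SR$ denotes Schmidt rank, i.e. the number of nonzero singular values of the coefficient matrix of a vector in $\mathcal{H}_n\otimes\mathcal{H}_m$. For $1\le k\le m$, \[ \|X\|_{S(k)} := \sup\{|\langle w|X|v\rangle| : |v\rangle,|w\rangle \text{ unit vectors}, SR(|v\rangle),SR(|w\rangle)\le k\}. \] *)

From HB Require Import structures.
From mathcomp Require Import all_boot all_order all_algebra.
From mathcomp Require Import boolp classical_sets reals.
From mathcomp.real_closed Require Import complex.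
Set Implicit Arguments. Unset Strict Implicit. Unset Printing Implicit Defensive.
Import Order.TTheory GRing.Theory Num.Theory.
Local Open Scope ring_scope.
Local Open Scope classical_set_scope.

(* Vectors of H_n (x) H_m = C^(n*m) are column vectors 'cV[R[i]]_(n*m); the
   basis vector e_i (x) f_j has index i*m + j (mxvec_index convention). *)

Definition coef_mx (R : rcfType) (n m : nat) (v : 'cV[R[i]]_(n * m)) : 'M[R[i]]_(n, m) :=
  vec_mx v^T.

(* Schmidt rank: number of nonzero singular values = rank of coefficient matrix *)
Definition schmidt_rank (R : rcfType) (n m : nat) (v : 'cV[R[i]]_(n * m)) : nat :=
  \rank (coef_mx v).

Definition sqnorm (R : rcfType) (d : nat) (v : 'cV[R[i]]_d) : R :=
  \sum_(i < d) Normc.normc (v i 0) ^+ 2.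

Definition unit_vec (R : rcfType) (d : nat) (v : 'cV[R[i]]_d) : Prop :=
  sqnorm v = 1.

Definition braket (R : rcfType) (d : nat) (w : 'cV[R[i]]_d) (X : 'M[R[i]]_d)
  (v : 'cV[R[i]]_d) : R[i] :=
  ((map_mx conjc w)^T *m X *m v) 0 0.

Definition normS (R : realType) (n m k : nat) (X : 'M[R[i]]_(n * m)) : R :=
  sup [set r : R | exists v w : 'cV[R[i]]_(n * m),
         [/\ unit_vec v, unit_vec w, (schmidt_rank v <= k)%N,
             (schmidt_rank w <= k)%N & r = Normc.normc (braket w X v)]].

From HB Require Import structures.
From mathcomp Require Import all_boot all_order all_algebra.
From mathcomp Require Import boolp classical_sets reals.
From mathcomp.real_closed Require Import complex.
From mathcomp Require Import sesquilinear spectral ring.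
Import Order.TTheory GRing.Theory Num.Theory.
Set Implicit Arguments. Unset Strict Implicit. Unset Printing Implicit Defensive.
Local Open Scope ring_scope.
Local Open Scope sesquilinear_scope.

(* Split a unit vector v of Schmidt rank at most k into an orthogonal sum
   v = t_0 + ... + t_(k-1) of vectors of Schmidt rank at most one (using an
   orthonormal frame of the row space of its coefficient matrix).  The k
   cyclic windows v_a = t_a + ... + t_(a+h-1), indices mod k, have Schmidt
   rank at most h, add up to h v, and their squared norms add up to h.  With
   the same windows w_b for w,
     h^2 |<w|X|v>| <= sum_(a,b) |<w_b|X|v_a>|
                   <= ||X||_S(h) sum_(a,b) |v_a| |w_b| <= ||X||_S(h) k h,
   the last step by AM-GM.  The lower bound is monotonicity of the sup. *)

Local Notation "x %:C" := (real_complex _ x) (format "x %:C") : ring_scope.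

Lemma sum_sqrt_mul_le (R : rcfType) k (p q : 'I_k -> R) :
  (forall a, 0 <= p a) -> (forall b, 0 <= q b) ->
  \sum_b \sum_a Num.sqrt (p a) * Num.sqrt (q b) <=
    k%:R * (\sum_a p a + \sum_b q b) / 2.
Proof.
move=> p_ge0 q_ge0; set P := \sum_a p a; set Q := \sum_b q b.
have amgm (x y : R) : x * y <= (x ^+ 2 + y ^+ 2) / 2.
  have := sqr_ge0 (x - y); rewrite sqrrB addrAC subr_ge0 => xy.
  by rewrite ler_pdivlMr // mulr_natr.
apply: le_trans (_ : \sum_b \sum_a (p a / 2 + q b / 2) <= _).
  apply: ler_sum => b _; apply: ler_sum => a _.
  by apply: le_trans (amgm _ _) _; rewrite !sqr_sqrtr // mulrDl.
rewrite (eq_bigr (fun b => P / 2 + q b / 2 *+ k)) => [|b _]; last first.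
  by rewrite big_split /= -mulr_suml sumr_const card_ord.
rewrite big_split /= sumr_const card_ord sumrMnl -mulr_suml.
by rewrite -mulrnDl -mulrDl -/Q -[_ *+ k]mulr_natl mulrA.
Qed.

Section SchmidtNorm.
Variable R : realType.
Local Notation C := (R[i]).

Lemma conjcE (z : C) : conjc z = z^*.
Proof.
rewrite [in RHS](Crect z) rmorphD rmorphM /= conjCi.
rewrite !conj_Creal ?Creal_Re ?Creal_Im //.
by rewrite -complexRe -complexIm; case: z => a b /=; simpc.
Qed.

Lemma normcE (z : C) : (Normc.normc z)%:C = `|z|.
Proof. by case: z => a b; rewrite normc_def. Qed.

Lemma normc_leE (x : C) (y : R) : (Normc.normc x <= y) = (`|x| <= y%:C).
Proof. by rewrite -normcE lecR. Qed.

Lemma normc_ge0 (x : C) : 0 <= Normc.normc x.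
Proof. by rewrite -lecR normcE rmorph0. Qed.

Lemma normc_real (a : R) : Normc.normc a%:C = `|a|.
Proof. by rewrite /= expr0n /= addr0 sqrtr_sqr. Qed.

Lemma conjC_real (a : R) : (a%:C)^* = a%:C :> C.
Proof. by rewrite -conjcE conjc_real. Qed.

Lemma ler_normc_sum (I : finType) (F : I -> C) :
  Normc.normc (\sum_i F i) <= \sum_i Normc.normc (F i).
Proof.
rewrite normc_leE rmorph_sum; apply: le_trans (ler_norm_sum _ _ _) _.
by apply: ler_sum => i _; rewrite /= normcE.
Qed.

Definition cdot d (x y : 'cV[C]_d) : C := \sum_(l < d) (x l 0)^* * y l 0.

Lemma cdot_sumr d (I : finType) (x : 'cV[C]_d) (F : I -> 'cV[C]_d) :
  cdot x (\sum_i F i) = \sum_i cdot x (F i).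
Proof.
rewrite /cdot exchange_big /=; apply: eq_bigr => l _.
by rewrite summxE mulr_sumr.
Qed.

Lemma cdot_suml d (I : finType) (y : 'cV[C]_d) (F : I -> 'cV[C]_d) :
  cdot (\sum_i F i) y = \sum_i cdot (F i) y.
Proof.
rewrite /cdot exchange_big /=; apply: eq_bigr => l _.
by rewrite summxE rmorph_sum mulr_suml.
Qed.

Lemma cdotZr d (x y : 'cV[C]_d) c : cdot x (c *: y) = c * cdot x y.
Proof.
by rewrite /cdot mulr_sumr; apply: eq_bigr => l _; rewrite mxE mulrCA.
Qed.

Lemma cdotZl d (x y : 'cV[C]_d) c : cdot (c *: x) y = c^* * cdot x y.
Proof.
rewrite /cdot mulr_sumr; apply: eq_bigr => l _.
by rewrite mxE rmorphM mulrA.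
Qed.

Lemma cdot0r d (x : 'cV[C]_d) : cdot x 0 = 0.
Proof. by rewrite /cdot big1 // => l _; rewrite mxE mulr0. Qed.

Lemma cdot0l d (y : 'cV[C]_d) : cdot 0 y = 0.
Proof. by rewrite /cdot big1 // => l _; rewrite mxE rmorph0 mul0r. Qed.

Lemma cdot_sum_orthogonal d k (I : finType) (t : 'I_k -> 'cV[C]_d)
    (f : I -> 'I_k) :
  (forall i j, i != j -> cdot (t i) (t j) = 0) -> injective f ->
  cdot (\sum_i t (f i)) (\sum_i t (f i)) = \sum_i cdot (t (f i)) (t (f i)).
Proof.
move=> t_orth f_inj; rewrite cdot_suml; apply: eq_bigr => i _.
rewrite cdot_sumr (bigD1 i) //= big1 ?addr0 // => j ji.
by apply: t_orth; apply: contra ji => /eqP/f_inj ->.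
Qed.

Lemma cdot_mxvec n m (A B : 'M[C]_(n, m)) :
  cdot (mxvec A)^T (mxvec B)^T = \sum_i \sum_j (A i j)^* * B i j.
Proof.
rewrite /cdot pair_bigA (reindex (uncurry (@mxvec_index n m))) /=.
  by apply: eq_bigr => -[i j] _; rewrite !mxE !mxvecE.
exact: curry_mxvec_bij.
Qed.

Lemma braketE d (w : 'cV[C]_d) X v : braket w X v = cdot w (X *m v).
Proof.
rewrite /braket /cdot -mulmxA mxE; apply: eq_bigr => l _.
by rewrite !mxE conjcE.
Qed.

Lemma braketZ d (x y : 'cV[C]_d) X (a b : R) :
  braket (b%:C *: y) X (a%:C *: x) = b%:C * (a%:C * braket y X x).
Proof. by rewrite !braketE -scalemxAr cdotZl cdotZr conjC_real. Qed.

Lemma sqnormE d (x : 'cV[C]_d) : (sqnorm x)%:C = cdot x x.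
Proof.
rewrite /sqnorm /cdot rmorph_sum; apply: eq_bigr => l _.
by rewrite rmorphXn /= normcE sqr_normc conjcE mulrC.
Qed.

Lemma sqnorm_ge0 d (x : 'cV[C]_d) : 0 <= sqnorm x.
Proof. by apply: sumr_ge0 => l _; rewrite exprn_ge0 // normc_ge0. Qed.

Lemma sqnorm_eq0 d (x : 'cV[C]_d) : sqnorm x = 0 -> x = 0.
Proof.
move=> /eqP; rewrite psumr_eq0 => [/allP x0|l _]; last first.
  by rewrite exprn_ge0 // normc_ge0.
apply/matrixP => l j; rewrite (ord1 j) mxE.
have /x0 : l \in index_enum 'I_d by rewrite mem_index_enum.
by rewrite /= sqrf_eq0 => /eqP/Normc.eq0_normc.
Qed.

Lemma sqnormZ d (x : 'cV[C]_d) (a : R) : sqnorm (a%:C *: x) = a ^+ 2 * sqnorm x.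
Proof.
apply: (@complexI R); rewrite !sqnormE rmorphM /= sqnormE.
by rewrite cdotZl cdotZr conjC_real mulrA rmorphXn /= expr2.
Qed.

Lemma unit_vec_normalize d (x : 'cV[C]_d) : Num.sqrt (sqnorm x) != 0 ->
  unit_vec ((Num.sqrt (sqnorm x))^-1%:C *: x).
Proof.
move=> sx0; rewrite /unit_vec sqnormZ exprVn sqr_sqrtr ?sqnorm_ge0 //.
by apply: mulVf; apply: contra sx0 => /eqP ->; rewrite sqrtr0.
Qed.

Lemma unit_vec_entry_le1 d (w : 'cV[C]_d) l : unit_vec w -> `|w l 0| <= 1.
Proof.
rewrite /unit_vec /sqnorm => w1; rewrite -(rmorph1 (real_complex R)) -normc_leE.
rewrite -(@expr_le1 _ 2) // ?normc_ge0 // -w1.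
rewrite (bigD1 l) //= lerDl; apply: sumr_ge0 => j _.
by rewrite exprn_ge0 // normc_ge0.
Qed.

(** * Orthogonal decomposition of vectors of bounded Schmidt rank *)

Lemma coef_mxvec n m (A : 'M[C]_(n, m)) : coef_mx (mxvec A)^T = A.
Proof. by rewrite /coef_mx trmxK mxvecK. Qed.

Lemma mxvec_coef n m (v : 'cV[C]_(n * m)) : (mxvec (coef_mx v))^T = v.
Proof. by rewrite /coef_mx vec_mxK trmxK. Qed.

Lemma coef_mx_sum n m (I : finType) (F : I -> 'cV[C]_(n * m)) :
  coef_mx (\sum_i F i) = \sum_i coef_mx (F i).
Proof.
apply/matrixP => a b; rewrite /coef_mx summxE !mxE summxE.
by apply: eq_bigr => i _; rewrite !mxE.
Qed.

Lemma schmidt_rank_sum_le n m (I : finType) (F : I -> 'cV[C]_(n * m)) :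
  (forall i, schmidt_rank (F i) <= 1)%N ->
  (schmidt_rank (\sum_i F i) <= #|I|)%N.
Proof.
move=> F1; rewrite /schmidt_rank coef_mx_sum -sum1_card.
elim/big_ind2: _ => [|A a B b rA rB|i _]; first by rewrite mxrank0.
- exact: leq_trans (mxrank_add A B) (leq_add rA rB).
- exact: F1.
Qed.

Lemma schmidt_rankZ_le n m (v : 'cV[C]_(n * m)) c :
  (schmidt_rank (c *: v) <= schmidt_rank v)%N.
Proof.
rewrite /schmidt_rank (_ : coef_mx _ = c *: coef_mx v) ?mxrank_scale //.
by apply/matrixP => a b; rewrite /coef_mx !mxE.
Qed.

Lemma sum_row_adj_mul k m (A : 'M[C]_(k, m)) :
  \sum_(j < k) (row j A)^t* *m row j A = A^t* *m A.
Proof.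
apply/matrixP => a b; rewrite summxE !mxE; apply: eq_bigr => j _.
by rewrite !mxE big_ord1 !mxE.
Qed.

(* [S] is an orthonormal basis of the row space of [M] padded with zero rows,
   so [S^t* *m S] projects onto that row space. *)
Lemma row_space_orthogonal_frame n m k (M : 'M[C]_(n, m)) :
  (\rank M <= k)%N ->
  exists S : 'M[C]_(k, m),
    M *m S^t* *m S = M /\ forall i j, i != j -> (S *m S^t*) i j = 0.
Proof.
move=> rk; set r := \rank M; set S := schmidt (row_base M).
have Su : S \is unitarymx by apply/schmidt_unitarymx/rank_leq_col.
have [Y defM] : exists Y, M = Y *m S.
  by apply/submxP; rewrite eqmx_schmidt_free ?row_base_free // eq_row_base.
set E : 'M[C]_(k, r) := pid_mx r.
have EtE : E^t* *m E = 1%:M.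
  by rewrite /E tr_pid_mx map_pid_mx mul_pid_mx !minnn (minn_idPr rk) pid_mx_1.
have SSt : S *m S^t* = 1%:M by apply/unitarymxP.
exists (E *m S); rewrite trmx_mul map_mxM !mulmxA; split.
  rewrite -[M *m _ *m E^t* *m E]mulmxA EtE mulmx1 defM.
  by rewrite -[Y *m S *m _]mulmxA SSt mulmx1.
move=> i j ij; rewrite -[E *m S *m _]mulmxA SSt mulmx1.
rewrite /E tr_pid_mx map_pid_mx mul_pid_mx mxE.
by have /negbTE -> : nat_of_ord i != j by [].
Qed.

Lemma schmidt_decomposition n m k (v : 'cV[C]_(n * m)) :
  (schmidt_rank v <= k)%N ->
  exists t : 'I_k -> 'cV[C]_(n * m),
    [/\ forall j, (schmidt_rank (t j) <= 1)%N, v = \sum_j t j &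
        forall i j, i != j -> cdot (t i) (t j) = 0].
Proof.
move=> rk; have [S [MS S_orth]] := row_space_orthogonal_frame rk.
set M := coef_mx v in MS.
pose T j := M *m ((row j S)^t* *m row j S).
have TE l a b : T l a b = (M *m (row l S)^t*) a 0 * S l b.
  by rewrite /T mulmxA [LHS]mxE big_ord1 [row _ _ _ _]mxE.
exists (fun j => (mxvec (T j))^T); split.
- move=> j; rewrite /schmidt_rank coef_mxvec /T mulmxA.
  exact: leq_trans (mxrankM_maxr _ _) (rank_leq_row _).
- rewrite -(raddf_sum (@trmx _ _ _)) -(raddf_sum mxvec) /T -mulmx_sumr.
  by rewrite sum_row_adj_mul mulmxA MS /M /= mxvec_coef.
move=> i j ij; rewrite cdot_mxvec.
under eq_bigr => a _ do under eq_bigr => b _ do rewrite !TE rmorphM /= mulrACA.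
suff Sij : \sum_(b < m) (S i b)^* * S j b = 0.
  by rewrite big1 // => a _; rewrite -big_distrr /= Sij mulr0.
rewrite -[RHS](S_orth j i); last by rewrite eq_sym.
by rewrite mxE; apply: eq_bigr => b _; rewrite !mxE mulrC.
Qed.

(** * Cyclic windows *)

Definition cyclic_shift k (k_gt0 : (0 < k)%N) (a : 'I_k) (i : nat) : 'I_k :=
  Ordinal (ltn_pmod (a + i) k_gt0).

Lemma cyclic_shift_inj k (k_gt0 : (0 < k)%N) a (i j : nat) :
  (i < k)%N -> (j < k)%N -> cyclic_shift k_gt0 a i = cyclic_shift k_gt0 a j ->
  i = j.
Proof.
move=> ik jk /(congr1 val) /= /eqP; rewrite eqn_modDl !modn_small //.
by move/eqP.
Qed.

Lemma cyclic_shift_inj_offset k (k_gt0 : (0 < k)%N) (i : nat) :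
  injective (cyclic_shift k_gt0 ^~ i).
Proof.
move=> a b /(congr1 val) /= /eqP; rewrite eqn_modDr !modn_small //.
by move/eqP/val_inj.
Qed.

Lemma sum_cyclic_windows (V : nmodType) k h (k_gt0 : (0 < k)%N)
    (F : 'I_k -> V) :
  \sum_(a < k) \sum_(i < h) F (cyclic_shift k_gt0 a i) = (\sum_j F j) *+ h.
Proof.
rewrite exchange_big /= -[h in RHS]card_ord -sumr_const.
apply: eq_bigr => i _.
by rewrite [RHS](reindex_inj (@cyclic_shift_inj_offset _ k_gt0 i)).
Qed.

Lemma cdot_cyclic_windows d k h (k_gt0 : (0 < k)%N) (hk : (h <= k)%N)
    (t : 'I_k -> 'cV[C]_d) :
  (forall i j, i != j -> cdot (t i) (t j) = 0) ->
  let window a := \sum_(i < h) t (cyclic_shift k_gt0 a i) in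
  \sum_(a < k) cdot (window a) (window a) =
    h%:R * cdot (\sum_j t j) (\sum_j t j).
Proof.
move=> t_orth window; rewrite (@cdot_sum_orthogonal d k _ t id) // mulr_natl.
rewrite -(sum_cyclic_windows h k_gt0 (fun j => cdot (t j) (t j))).
apply: eq_bigr => a _; apply: cdot_sum_orthogonal => // i j.
move/cyclic_shift_inj => eq_ij; apply/val_inj/eq_ij.
  exact: leq_trans (ltn_ord i) hk.
exact: leq_trans (ltn_ord j) hk.
Qed.

Lemma window_decomposition n m h k (v : 'cV[C]_(n * m)) :
  (0 < h)%N -> (h <= k)%N -> unit_vec v -> (schmidt_rank v <= k)%N ->
  exists va : 'I_k -> 'cV[C]_(n * m),
    [/\ forall a, (schmidt_rank (va a) <= h)%N,
        \sum_a va a = h%:R *: v & \sum_a sqnorm (va a) = h%:R].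
Proof.
move=> h_gt0 hk v1 rv; have k_gt0 : (0 < k)%N := leq_trans h_gt0 hk.
have [t [t1 vE t_orth]] := schmidt_decomposition rv.
exists (fun a => \sum_(i < h) t (cyclic_shift k_gt0 a i)); split.
- move=> a; rewrite -[h in (_ <= h)%N]card_ord.
  by apply: schmidt_rank_sum_le => i; apply: t1.
- by rewrite sum_cyclic_windows scaler_nat vE.
apply: (@complexI R); rewrite rmorph_sum rmorph_nat /=.
under eq_bigr do rewrite sqnormE.
by rewrite cdot_cyclic_windows // -vE -sqnormE v1 rmorph1 mulr1.
Qed.

Definition braket_values n m k (X : 'M[C]_(n * m)) : set R :=
  [set r : R | exists v w : 'cV[C]_(n * m),
         [/\ unit_vec v, unit_vec w, (schmidt_rank v <= k)%N,
             (schmidt_rank w <= k)%N & r = Normc.normc (braket w X v)]].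

Lemma normSE n m k (X : 'M[C]_(n * m)) : normS k X = sup (braket_values k X).
Proof. by []. Qed.

Lemma normc_braket_le n m (X : 'M[C]_(n * m)) v w :
  unit_vec v -> unit_vec w ->
  Normc.normc (braket w X v) <= \sum_i \sum_j Normc.normc (X i j).
Proof.
move=> v1 w1; rewrite normc_leE braketE /cdot rmorph_sum.
apply: le_trans (ler_norm_sum _ _ _) _; apply: ler_sum => i _.
rewrite rmorph_sum normrM norm_conjC mxE.
apply: le_trans (ler_piMl _ (unit_vec_entry_le1 i w1)) _ => //.
apply: le_trans (ler_norm_sum _ _ _) _; apply: ler_sum => j _.
by rewrite normrM /= normcE ler_piMr // unit_vec_entry_le1.
Qed.

Lemma braket_values_ubound n m k (X : 'M[C]_(n * m)) :
  has_ubound (braket_values k X).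
Proof.
exists (\sum_i \sum_j Normc.normc (X i j)) => r [v [w [v1 w1 _ _ ->]]].
exact: normc_braket_le.
Qed.

Lemma normc_braket_le_normS n m k (X : 'M[C]_(n * m)) v w :
  unit_vec v -> unit_vec w -> (schmidt_rank v <= k)%N ->
  (schmidt_rank w <= k)%N -> Normc.normc (braket w X v) <= normS k X.
Proof.
move=> v1 w1 rv rw; rewrite normSE.
by apply: ub_le_sup; [exact: braket_values_ubound | exists v, w].
Qed.

Lemma exists_unit_product_vec n m : (0 < n)%N -> (0 < m)%N ->
  exists v : 'cV[C]_(n * m), unit_vec v /\ (schmidt_rank v <= 1)%N.
Proof.
move=> n_gt0 m_gt0; pose i0 := Ordinal n_gt0; pose j0 := Ordinal m_gt0.
exists (mxvec (delta_mx i0 j0))^T; split; last first.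
  by rewrite /schmidt_rank coef_mxvec mxrank_delta.
apply: (@complexI R); rewrite sqnormE cdot_mxvec rmorph1.
rewrite (bigD1 i0) //= (bigD1 j0) //= !mxE !eqxx /= conjC_real mulr1.
rewrite big1 => [|j /negPf ji]; last by rewrite !mxE ji andbF mulr0.
rewrite big1 => [|i /negPf ii]; first by rewrite !addr0.
by apply: big1 => j _; rewrite !mxE ii mulr0.
Qed.

Lemma normc_braket_le_normS_scaled n m h (X : 'M[C]_(n * m)) x y :
  (schmidt_rank x <= h)%N -> (schmidt_rank y <= h)%N ->
  Normc.normc (braket y X x) <=
    normS h X * Num.sqrt (sqnorm x) * Num.sqrt (sqnorm y).
Proof.
move=> rx ry; set sx := Num.sqrt _; set sy := Num.sqrt _.
have sqrt_sqnorm_eq0 d (z : 'cV[C]_d) : Num.sqrt (sqnorm z) = 0 -> z = 0.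
  move=> /eqP; rewrite sqrtr_eq0 => z0; apply: sqnorm_eq0.
  by apply/eqP; rewrite eq_le z0 sqnorm_ge0.
have [sx0|sx0] := eqVneq sx 0.
  rewrite sx0 (sqrt_sqnorm_eq0 _ _ sx0) braketE mulmx0 cdot0r.
  by rewrite Normc.normc0 mulr0 mul0r.
have [sy0|sy0] := eqVneq sy 0.
  by rewrite sy0 (sqrt_sqnorm_eq0 _ _ sy0) braketE cdot0l Normc.normc0 mulr0.
have sx_gt0 : 0 < sx by rewrite lt_def sx0 sqrtr_ge0.
have sy_gt0 : 0 < sy by rewrite lt_def sy0 sqrtr_ge0.
have := normc_braket_le_normS X (unit_vec_normalize sx0) (unit_vec_normalize sy0)
  (leq_trans (schmidt_rankZ_le _ _) rx) (leq_trans (schmidt_rankZ_le _ _) ry).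
rewrite braketZ !Normc.normcM !normc_real !ger0_norm ?invr_ge0 ?sqrtr_ge0 //.
rewrite -/sx -/sy mulrA -invfM mulrC ler_pdivrMr ?mulr_gt0 //.
by rewrite (mulrC sy) mulrA.
Qed.

Lemma normc_braket_le_ratio n m h k (X : 'M[C]_(n * m)) v w :
  (0 < h)%N -> (h <= k)%N -> 0 <= normS h X ->
  unit_vec v -> unit_vec w -> (schmidt_rank v <= k)%N ->
  (schmidt_rank w <= k)%N ->
  Normc.normc (braket w X v) <= k%:R / h%:R * normS h X.
Proof.
move=> h_gt0 hk N_ge0 v1 w1 rv rw.
have [va [rva sum_va sqnorm_va]] := window_decomposition h_gt0 hk v1 rv.
have [wb [rwb sum_wb sqnorm_wb]] := window_decomposition h_gt0 hk w1 rw.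
set N := normS h X in N_ge0 *; set B := Normc.normc (braket w X v).
have expand : (h%:R)%:C * ((h%:R)%:C * braket w X v) =
    \sum_b \sum_a braket (wb b) X (va a).
  rewrite -braketZ rmorph_nat -sum_va -sum_wb braketE mulmx_sumr cdot_suml.
  apply: eq_bigr => b _; rewrite cdot_sumr.
  by apply: eq_bigr => a _; rewrite braketE.
have hh_le : h%:R * (h%:R * B) <= N * (k%:R * (h%:R + h%:R) / 2).
  have -> : h%:R * (h%:R * B) =
      Normc.normc (\sum_b \sum_a braket (wb b) X (va a)).
    by rewrite -expand !Normc.normcM normc_real ger0_norm.
  apply: le_trans (ler_normc_sum _) _.
  apply: le_trans (_ : \sum_b \sum_a
      N * (Num.sqrt (sqnorm (va a)) * Num.sqrt (sqnorm (wb b))) <= _).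
    apply: ler_sum => b _; apply: le_trans (ler_normc_sum _) _.
    apply: ler_sum => a _.
    by rewrite mulrA; apply: normc_braket_le_normS_scaled.
  under eq_bigr do rewrite -mulr_sumr.
  rewrite -mulr_sumr -{1}sqnorm_va -sqnorm_wb; apply: ler_wpM2l => //.
  by apply: sum_sqrt_mul_le => a; apply: sqnorm_ge0.
have h_gt0' : (0 : R) < h%:R by rewrite ltr0n.
rewrite -(ler_pM2l h_gt0') -(ler_pM2l h_gt0'); apply: le_trans hh_le _.
by rewrite le_eqVlt; apply/predU1l; field; rewrite lt0r_neq0.
Qed.

End SchmidtNorm.

Local Close Scope sesquilinear_scope.

Theorem theorem4p13 (R : realType) (n m h k : nat)
  (hmn : (m <= n)%N) (h1 : (1 <= h)%N) (hhk : (h <= k)%N) (hkm : (k <= m)%N)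
  (X : 'M[R[i]]_(n * m)) :
  normS h X <= normS k X <= (k%:R / h%:R) * normS h X.
Proof.
have m_gt0 : (0 < m)%N := leq_trans h1 (leq_trans hhk hkm).
have [v [v1 rv]] := exists_unit_product_vec R (leq_trans m_gt0 hmn) m_gt0.
have values_nonempty j : (1 <= j)%N -> (braket_values j X !=set0)%classic.
  by move=> j1; exists (Normc.normc (braket v X v)), v, v; split;
    rewrite ?(leq_trans rv j1).
have N_ge0 : 0 <= normS h X.
  apply: le_trans (normc_ge0 (braket v X v)) _.
  by apply: normc_braket_le_normS; rewrite // (leq_trans rv h1).
apply/andP; split; rewrite [X in X <= _]normSE.
  apply: ge_sup => [|_ [x [y [x1 y1 rx ry ->]]]]; first exact: values_nonempty.
  by apply: normc_braket_le_normS; rewrite // (leq_trans _ hhk).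
apply: ge_sup => [|_ [x [y [x1 y1 rx ry ->]]]].
  exact: values_nonempty (leq_trans h1 hhk).
exact: normc_braket_le_ratio.
Qed.
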